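(* Let $X$ and $Y$ be non-trivial Banach spaces, $r,s\in(0,1]$, and $\kappa$ a cardinal. If $X$ is $(r,s)$-$\mathrm{SQ}_{<\kappa}$, then $X\oplus_\infty Y$ is $(r,s)$-$\mathrm{SQ}_{<\kappa}$.
   Context: $X\oplus_\infty Y$ is $X\times Y$ with norm $\max\{\|x\|,\|y\|\}$. A Banach space $Z$ is $(r,s)$-$\mathrm{SQ}_{<\kappa}$ if for every set $A\subset S_Z$ with $|A|<\kappa$ there exists $y\in S_Z$ with $\|rx\pm sy\|\le 1$ for all $x\in A$. *)

From HB Require Import structures.
From mathcomp Require Import all_boot all_order all_algebra.
From mathcomp Require Import all_classical all_reals all_analysis.
Import Order.TTheory GRing.Theory Num.Theory.
Import numFieldNormedType.Exports.
Set Implicit Arguments. Unset Strict Implicit. Unset Printing Implicit Defensive.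
Local Open Scope classical_set_scope.
Local Open Scope ring_scope.

(* strict cardinal comparison |A| < |B| (the cardinal kappa is represented by
   the full set of a type K) *)
Definition card_lt (T U : Type) (A : set T) (B : set U) : Prop :=
  (A #<= B)%card /\ ~ (B #<= A)%card.

Definition unit_sphere (R : realType) (Z : normedModType R) : set Z :=
  [set z | `|z| = 1].

Definition SQ_lt (R : realType) (Z : normedModType R) (r s : R) (K : Type) : Prop :=
  forall A : set Z, A `<=` @unit_sphere R Z -> card_lt A [set: K] ->
    exists2 y : Z, y \in @unit_sphere R Z &
      forall x, A x -> `|r *: x + s *: y| <= 1 /\ `|r *: x - s *: y| <= 1.

From HB Require Import structures.
From mathcomp Require Import all_boot all_order all_algebra.
From mathcomp Require Import all_classical all_reals all_analysis.
From mathcomp Require Import lra.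
Import Order.TTheory GRing.Theory Num.Theory.
Import numFieldNormedType.Exports.
Local Open Scope classical_set_scope.
Local Open Scope ring_scope.

(* Given A in the unit sphere of X (+)_oo Y, normalize the nonzero first
   coordinates of A into a set B of the unit sphere of X, with |B| <= |A|, and
   pick y0 for B in X.  Then (y0, 0) works for A: on the X side,
   r x +- s y0 = t (r x/t +- s y0) + (1 - t) (+- s y0) with t = |x| is a convex
   combination of points of the unit ball; on the Y side |r y| <= 1 trivially. *)

Section NormedModule.
Variables (R : realType) (V : normedModType R).

Definition normalized (x : V) : V := `|x|^-1 *: x.

Lemma norm_normalized (x : V) : x != 0 -> `|normalized x| = 1.
Proof.
move=> x0; rewrite normrZ normrV ?unitfE ?normr_eq0 // normr_id.
by rewrite mulVf // normr_eq0.
Qed.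

Lemma norm_add_le1_shrink (t : R) (u y : V) :
  0 < t <= 1 -> `|y| <= 1 -> `|t^-1 *: u + y| <= 1 -> `|u + y| <= 1.
Proof.
move=> /andP[t0 t1] y1 uy1.
have -> : u + y = t *: (t^-1 *: u + y) + (1 - t) *: y.
  by rewrite scalerDr scalerA mulfV ?gt_eqF // scale1r -addrA -scalerDl
    [t + _]addrC subrK scale1r.
apply: (le_trans (ler_normD _ _)).
rewrite !normrZ (gtr0_norm t0) (ger0_norm (x := 1 - t)) ?subr_ge0 //.
have h1 : t * `|t^-1 *: u + y| <= t by exact: ler_piMr (ltW t0) uy1.
have h2 : (1 - t) * `|y| <= 1 - t by apply: ler_piMr; rewrite ?subr_ge0.
by apply: (le_trans (lerD h1 h2)); lra.
Qed.

Lemma norm_scale_add_le1 (r s : R) (x y0 : V) :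
  `|s| <= 1 -> `|y0| = 1 -> `|x| <= 1 ->
  (x != 0 -> `|r *: normalized x + s *: y0| <= 1) ->
  `|r *: x + s *: y0| <= 1.
Proof.
move=> s1 y01 x1; have [->|x0 /(_ isT) nx_le1] := eqVneq x 0.
  by rewrite scaler0 add0r normrZ y01 mulr1.
apply: (@norm_add_le1_shrink `|x|); first by rewrite normr_gt0 x0.
  by rewrite normrZ y01 mulr1.
by rewrite scalerA mulrC -scalerA.
Qed.

End NormedModule.

Arguments normalized {R V}.

Lemma card_lt_le_trans (T U W : Type) (A : set T) (B : set U) (C : set W) :
  (A #<= B)%card -> card_lt B C -> card_lt A C.
Proof.
move=> AB [BC CB]; split; first exact: card_le_trans AB BC.
by move=> CA; apply: CB; apply: card_le_trans CA AB.
Qed.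

Lemma norm_prod_scale_add_le1 (R : realType) (X Y : normedModType R)
    (r s : R) (x y0 : X) (y : Y) :
  `|r| <= 1 -> `|s| <= 1 -> `|y0| = 1 -> `|(x, y)| = 1 ->
  (x != 0 -> `|r *: normalized x + s *: y0| <= 1) ->
  `|r *: (x, y) + s *: (y0, 0)| <= 1.
Proof.
rewrite prod_normE /= => r1 s1 y01 xy1 Hx.
rewrite prod_normE /= scaler0 addr0 ge_max; apply/andP; split.
  by apply: norm_scale_add_le1 => //; rewrite -xy1 le_max lexx.
by rewrite normrZ (le_trans (ler_piMl (normr_ge0 _) r1)) // -xy1 le_max lexx orbT.
Qed.

Theorem proposition6p6 (R : realType) (X Y : completeNormedModType R)
  (r s : R) (K : Type) :
  (exists x : X, x != 0) -> (exists y : Y, y != 0) ->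
  0 < r <= 1 -> 0 < s <= 1 ->
  SQ_lt X r s K -> SQ_lt (X * Y)%type r s K.
Proof.
move=> _ _ /andP[r0 r1] /andP[s0 s1] SQX A AS AK.
pose B := [set normalized z.1 | z in [set z | A z /\ z.1 != 0]].
have BS : B `<=` @unit_sphere R X by move=> _ [z [_ z0] <-]; exact: norm_normalized.
have BK : card_lt B [set: K].
  apply: card_lt_le_trans AK; apply: card_le_trans (card_image_le _ _) _.
  by apply: subset_card_le => z [].
have [y0 /[!inE] y01 Hy0] := SQX B BS BK.
exists (y0, 0); first by rewrite inE /unit_sphere /= prod_normE /= normr0 y01 max_l.
move=> [x y] Axy; have xy1 := AS _ Axy.
have Bx : x != 0 -> B (normalized x) by move=> x0; exists (x, y).
have [r1' s1'] : `|r| <= 1 /\ `|s| <= 1 by rewrite !gtr0_norm.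
split.
  by apply: norm_prod_scale_add_le1 => // /Bx /Hy0 [].
rewrite -scaleNr; apply: norm_prod_scale_add_le1 => //; first by rewrite normrN.
by move=> /Bx /Hy0 [_]; rewrite scaleNr.
Qed.
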